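(* Let $A\in B$ be sets with $\mathcal P(1)\cap A=\mathcal P(1)\cap B$, where $A$ is BCST-regular and $B$ is a transitive model of $\mathsf{CZF^-}$. Let $P\subseteq A$ with $P\in B$, $a\in A$, and $R\in B$ with $R:a\rightrightarrows A\cap\mathcal P(P)$ (so $R\subseteq a\times(A\cap\mathcal P(P))$). Assume $R$ is monotone closed: for $y,z\in A$ with $y\subseteq z\subseteq P$, $\langle x,y\rangle\in R$ implies $\langle x,z\rangle\in R$. Then there is $b\in A$ with $b\subseteq P$ and $\langle x,b\rangle\in R$ for all $x\in a$.
   Context: Work in $\mathsf{CZF^-}$. $R:a\rightrightarrows C$ means $\forall x\in a\exists y\in C\,\langle x,y\rangle\in R$. A set $A$ is regular if it is transitive and for every $a\in A$ and every class $R$ with $R:a\rightrightarrows A$ there is $b\in A$ with $R:a\rightrightarrows b$ and $\forall y\in b\exists x\in a\,\langle x,y\rangle\in R$; BCST-regular if moreover it satisfies Union, Pairing, Emptyset and Binary Intersection. $1=\{0\}$. *)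

(* The ambient set-theoretic universe is an abstract structure (V, mem) that is
   assumed to be a model of CZF^- (CZF without Subset Collection); axiom schemes
   are stated via a deep embedding of first-order formulas of the language {∈,=},
   so "classes" are formula-definable classes with set parameters. *)

Section SetTheory.
Variable V : Type.
Variable mem : V -> V -> Prop.

(* first-order formulas, de Bruijn variables; in fBAll i f / fBEx i f the
   bounded variable is index 0 of f and the bound is the (outer) variable i *)
Inductive form : Type :=
| fMem : nat -> nat -> form
| fEq  : nat -> nat -> form
| fBot : form
| fAnd : form -> form -> form
| fOr  : form -> form -> form
| fImp : form -> form -> form
| fAll : form -> form
| fEx  : form -> form
| fBAll : nat -> form -> form
| fBEx  : nat -> form -> form.

Definition scons (x : V) (e : nat -> V) : nat -> V :=
  fun n => match n with 0 => x | S m => e m end.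

Fixpoint sat (D : V -> Prop) (e : nat -> V) (f : form) : Prop :=
  match f with
  | fMem i j => mem (e i) (e j)
  | fEq i j => e i = e j
  | fBot => False
  | fAnd f g => sat D e f /\ sat D e g
  | fOr f g => sat D e f \/ sat D e g
  | fImp f g => sat D e f -> sat D e g
  | fAll f => forall x, D x -> sat D (scons x e) f
  | fEx f => exists x, D x /\ sat D (scons x e) f
  | fBAll i f => forall x, D x -> mem x (e i) -> sat D (scons x e) f
  | fBEx i f => exists x, D x /\ mem x (e i) /\ sat D (scons x e) f
  end.

Fixpoint bounded (f : form) : Prop :=
  match f with
  | fMem _ _ | fEq _ _ | fBot => True
  | fAnd f g | fOr f g | fImp f g => bounded f /\ bounded g
  | fAll _ | fEx _ => False
  | fBAll _ f | fBEx _ f => bounded f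
  end.

Definition env_in (D : V -> Prop) (e : nat -> V) : Prop := forall n, D (e n).

Definition CZFm_model (D : V -> Prop) : Prop :=
  (forall x y, D x -> D y -> (forall z, D z -> (mem z x <-> mem z y)) -> x = y) /\
  (forall x y, D x -> D y -> exists z, D z /\
      forall w, D w -> (mem w z <-> (w = x \/ w = y))) /\
  (forall x, D x -> exists z, D z /\
      forall w, D w -> (mem w z <-> exists y, D y /\ mem y x /\ mem w y)) /\
  (exists om, D om /\ forall u, D u ->
      (mem u om <->
        ((forall w, D w -> ~ mem w u) \/
         exists v, D v /\ mem v om /\
           forall w, D w -> (mem w u <-> (mem w v \/ w = v))))) /\
  (forall f e, env_in D e ->
      (forall x, D x -> (forall y, D y -> mem y x -> sat D (scons y e) f) ->
                 sat D (scons x e) f) ->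
      forall x, D x -> sat D (scons x e) f) /\
  (forall f e a, bounded f -> env_in D e -> D a ->
      exists b, D b /\ forall x, D x ->
        (mem x b <-> (mem x a /\ sat D (scons x e) f))) /\
  (forall f e a, env_in D e -> D a ->
      (forall x, D x -> mem x a -> exists y, D y /\ sat D (scons y (scons x e)) f) ->
      exists b, D b /\
        (forall x, D x -> mem x a -> exists y, D y /\ mem y b /\
                                     sat D (scons y (scons x e)) f) /\
        (forall y, D y -> mem y b -> exists x, D x /\ mem x a /\
                                     sat D (scons y (scons x e)) f)).

Definition satV (e : nat -> V) (f : form) : Prop := sat (fun _ => True) e f.

Definition subset (x y : V) : Prop := forall z, mem z x -> mem z y.
Definition transitive (A : V) : Prop := forall x y, mem x A -> mem y x -> mem y A.

Definition is_upair (z x y : V) : Prop := forall w, mem w z <-> (w = x \/ w = y).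
Definition is_opair (p x y : V) : Prop :=
  forall w, mem w p <-> (is_upair w x x \/ is_upair w x y).

Definition pair_in (R x y : V) : Prop := exists p, mem p R /\ is_opair p x y.

(* <x,y> ∈ R for the class R = {p | phi(p, params e)} *)
Definition pair_in_cls (phi : form) (e : nat -> V) (x y : V) : Prop :=
  exists p, is_opair p x y /\ satV (scons p e) phi.

Definition regular (A : V) : Prop :=
  transitive A /\
  forall a phi e, mem a A ->
    (forall x, mem x a -> exists y, mem y A /\ pair_in_cls phi e x y) ->
    exists b, mem b A /\
      (forall x, mem x a -> exists y, mem y b /\ pair_in_cls phi e x y) /\
      (forall y, mem y b -> exists x, mem x a /\ pair_in_cls phi e x y).

Definition BCST_regular (A : V) : Prop :=
  regular A /\
  (forall x, mem x A -> exists u, mem u A /\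
      forall w, mem w u <-> exists y, mem y x /\ mem w y) /\
  (forall x y, mem x A -> mem y A -> exists z, mem z A /\ is_upair z x y) /\
  (exists z, mem z A /\ forall w, ~ mem w z) /\
  (forall x y, mem x A -> mem y A -> exists z, mem z A /\
      forall w, mem w z <-> (mem w x /\ mem w y)).

(* x ∈ P(1), where 1 = {0} *)
Definition sub_one (x : V) : Prop := forall w, mem w x -> forall z, ~ mem z w.

End SetTheory.


(* Regard the set R as the class defined by the formula
   "p ∈ R" (parameter R).  Since R is total from a into A, regularity of A
   yields b0 ∈ A such that every x ∈ a is R-related to some y ∈ b0 and every
   y ∈ b0 is an R-image of some x ∈ a.  By the Union axiom of A, b := ⋃ b0
   lies in A.  Every y ∈ b0 is an R-image, hence y ⊆ P; so b ⊆ P.  For x ∈ a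
   pick y ∈ b0 with ⟨x,y⟩ ∈ R; then y ⊆ b ⊆ P, and monotone closure of R
   gives ⟨x,b⟩ ∈ R. *)

Section Pairs.
Variable V : Type.
Variable mem : V -> V -> Prop.

Lemma upair_exists (HCZF : CZFm_model V mem (fun _ => True)) (u v : V) :
  exists z, is_upair V mem z u v.
Proof.
  destruct HCZF as [_ [Hpair _]].
  destruct (Hpair u v I I) as [z [_ Hz]].
  exists z; intro w; exact (Hz w I).
Qed.

(* A Kuratowski pair determines its first component: {x} belongs to it. *)
Lemma opair_fst_inj (HCZF : CZFm_model V mem (fun _ => True)) (p x y x' y' : V) :
  is_opair V mem p x y -> is_opair V mem p x' y' -> x = x'.
Proof.
  intros H1 H2.
  destruct (upair_exists HCZF x x) as [s Hs].
  assert (Hsp : mem s p) by (apply H1; left; exact Hs).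
  apply H2 in Hsp.
  assert (Hx's : mem x' s) by (destruct Hsp as [Hu | Hu]; apply Hu; left; reflexivity).
  apply Hs in Hx's; destruct Hx's; congruence.
Qed.

(* A Kuratowski pair determines its second component: comparing the
   elements {x, y} and {x, y'} shows y ∈ {x, y'} and y' ∈ {x, y}. *)
Lemma opair_snd_inj (HCZF : CZFm_model V mem (fun _ => True)) (p x y x' y' : V) :
  is_opair V mem p x y -> is_opair V mem p x' y' -> y = y'.
Proof.
  intros H1 H2.
  pose proof (opair_fst_inj HCZF p x y x' y' H1 H2) as Ex; subst x'.
  assert (Hcross : forall u v, is_opair V mem p x u -> is_opair V mem p x v ->
                     u = x \/ u = v).
  { intros u v Hu Hv.
    destruct (upair_exists HCZF x u) as [w Hw].
    assert (Hwp : mem w p) by (apply Hu; right; exact Hw).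
    assert (Huw : mem u w) by (apply Hw; right; reflexivity).
    apply Hv in Hwp; destruct Hwp as [Hs | Hs]; apply Hs in Huw; tauto. }
  destruct (Hcross y y' H1 H2), (Hcross y' y H2 H1); congruence.
Qed.

End Pairs.

Section Regularity.
Variable V : Type.
Variable mem : V -> V -> Prop.

Lemma pair_in_cls_of_set (R x y : V) :
  pair_in_cls V mem (fMem 0 1) (fun _ => R) x y <-> pair_in V mem R x y.
Proof.
  unfold pair_in_cls, pair_in, satV; simpl.
  split; intros [p [H1 H2]]; exists p; split; assumption.
Qed.

Lemma regular_set_relation (A a R : V) :
  regular V mem A -> mem a A ->
  (forall x, mem x a -> exists y, mem y A /\ pair_in V mem R x y) ->
  exists b, mem b A /\
    (forall x, mem x a -> exists y, mem y b /\ pair_in V mem R x y) /\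
    (forall y, mem y b -> exists x, mem x a /\ pair_in V mem R x y).
Proof.
  intros [_ Hreg] Ha Htot.
  destruct (Hreg a (fMem 0 1) (fun _ => R) Ha) as [b [Hb [Hl Hr]]].
  { intros x Hx; destruct (Htot x Hx) as [y [Hy Hxy]].
    exists y; split; [exact Hy | apply pair_in_cls_of_set; exact Hxy]. }
  exists b; split; [exact Hb | split].
  - intros x Hx; destruct (Hl x Hx) as [y [Hy Hxy]].
    exists y; split; [exact Hy | apply pair_in_cls_of_set; exact Hxy].
  - intros y Hy; destruct (Hr y Hy) as [x [Hx Hxy]].
    exists x; split; [exact Hx | apply pair_in_cls_of_set; exact Hxy].
Qed.

End Regularity.

Theorem mainTheorem14 (V : Type) (mem : V -> V -> Prop)
  (HCZF : CZFm_model V mem (fun _ => True))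
  (A B P a R : V)
  (HAB : mem A B)
  (HP1 : forall x, sub_one V mem x -> (mem x A <-> mem x B))
  (HA : BCST_regular V mem A)
  (HBt : transitive V mem B)
  (HBm : CZFm_model V mem (fun x => mem x B))
  (HPA : subset V mem P A) (HPB : mem P B)
  (Ha : mem a A) (HRB : mem R B)
  (HRtot : forall x, mem x a -> exists y, mem y A /\ subset V mem y P /\ pair_in V mem R x y)
  (HRsub : forall p, mem p R -> exists x y, is_opair V mem p x y /\
             mem x a /\ mem y A /\ subset V mem y P)
  (Hmono : forall x y z, mem y A -> mem z A -> subset V mem y z -> subset V mem z P ->
             pair_in V mem R x y -> pair_in V mem R x z) :
  exists b, mem b A /\ subset V mem b P /\ forall x, mem x a -> pair_in V mem R x b.
Proof.
  destruct HA as [Hreg [Hunion _]].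
  assert (Himage_sub : forall x y, pair_in V mem R x y -> subset V mem y P).
  { intros x y [p [Hp Hop]].
    destruct (HRsub p Hp) as [x' [y' [Hop' [_ [_ Hy'P]]]]].
    rewrite (opair_snd_inj V mem HCZF p x y x' y' Hop Hop'); exact Hy'P. }
  destruct (regular_set_relation V mem A a R Hreg Ha) as [b0 [Hb0 [Hfull Honto]]].
  { intros x Hx; destruct (HRtot x Hx) as [y [Hy [_ Hxy]]]; eauto. }
  destruct (Hunion b0 Hb0) as [b [Hb Hbdef]].
  assert (HbP : subset V mem b P).
  { intros w Hw; apply Hbdef in Hw; destruct Hw as [y [Hy Hwy]].
    destruct (Honto y Hy) as [x [_ Hxy]].
    exact (Himage_sub x y Hxy w Hwy). }
  exists b; split; [exact Hb | split; [exact HbP |]].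
  intros x Hx; destruct (Hfull x Hx) as [y [Hy Hxy]].
  apply (Hmono x y b); [exact (proj1 Hreg b0 y Hb0 Hy) | exact Hb | | exact HbP | exact Hxy].
  intros w Hw; apply Hbdef; exists y; split; assumption.
Qed.
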